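(* For any $x\in\mathbb{R}^n$ and $\widehat{\mathbf{A}}=(\mathbf{A}_1,\dots,\mathbf{A}_n)\in I(\mathbb{R})^n$, \[x^T\odot\widehat{\mathbf{A}}\preceq\|x\|\odot\big[\|\widehat{\mathbf{A}}\|_{I(\mathbb{R})^n},\|\widehat{\mathbf{A}}\|_{I(\mathbb{R})^n}\big].\]
   Context: $I(\mathbb{R})$: nonempty compact intervals $\mathbf{A}=[\underline{a},\overline{a}]$; $\mathbf{A}\oplus\mathbf{B}=[\underline{a}+\underline{b},\overline{a}+\overline{b}]$; $\lambda\odot\mathbf{A}=[\min\{\lambda\underline{a},\lambda\overline{a}\},\max\{\lambda\underline{a},\lambda\overline{a}\}]$; $x^T\odot\widehat{\mathbf{A}}=\bigoplus_{i=1}^n x_i\odot\mathbf{A}_i$; $\mathbf{A}\preceq\mathbf{B}$ iff $\underline{a}\le\underline{b}$ and $\overline{a}\le\overline{b}$; $\|\mathbf{A}\|_{I(\mathbb{R})}=\max\{|\underline{a}|,|\overline{a}|\}$; $\|\widehat{\mathbf{A}}\|_{I(\mathbb{R})^n}=\sqrt{\sum_i\|\mathbf{A}_i\|_{I(\mathbb{R})}^2}$; $\|x\|$ Euclidean norm. *)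

(* R : rcfType (real closed field, so Num.sqrt exists); the
   paper's R is the reals, covered by taking R := any realType. *)
From mathcomp Require Import all_boot all_order all_algebra.
Set Implicit Arguments. Unset Strict Implicit. Unset Printing Implicit Defensive.
Import Order.TTheory GRing.Theory Num.Theory.
Local Open Scope ring_scope.

Record ivl (R : realDomainType) := Interval {
  ilo : R; ihi : R; ilo_le_ihi : ilo <= ihi }.

Section IntervalOps.
Variable R : rcfType.

Definition iadd (A B : ivl R) : ivl R :=
  @Interval R (ilo A + ilo B) (ihi A + ihi B) (lerD (ilo_le_ihi A) (ilo_le_ihi B)).

Lemma iscale_ok (l : R) (A : ivl R) :
  Num.min (l * ilo A) (l * ihi A) <= Num.max (l * ilo A) (l * ihi A).
Proof. by rewrite ge_min !le_max lexx. Qed.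

Definition iscale (l : R) (A : ivl R) : ivl R :=
  @Interval R (Num.min (l * ilo A) (l * ihi A)) (Num.max (l * ilo A) (l * ihi A))
    (iscale_ok l A).

Definition izero : ivl R := @Interval R 0 0 (lexx 0).

Definition idot (n : nat) (x : 'I_n -> R) (A : 'I_n -> ivl R) : ivl R :=
  \big[iadd/izero]_(i < n) iscale (x i) (A i).

Definition ile (A B : ivl R) : Prop := ilo A <= ilo B /\ ihi A <= ihi B.

Definition inorm (A : ivl R) : R := Num.max `|ilo A| `|ihi A|.

Definition ivnorm (n : nat) (A : 'I_n -> ivl R) : R :=
  Num.sqrt (\sum_(i < n) inorm (A i) ^+ 2).

Definition enorm (n : nat) (x : 'I_n -> R) : R := Num.sqrt (\sum_(i < n) x i ^+ 2).

Definition ipoint (a : R) : ivl R := @Interval R a a (lexx a).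

End IntervalOps.

(* Each summand x_i ⊙ A_i of x^T ⊙ Â lies in [-|x_i| ‖A_i‖, |x_i| ‖A_i‖], so the
   upper end of the sum is at most Σ |x_i| ‖A_i‖, which the Cauchy–Schwarz
   inequality bounds by ‖x‖ ‖Â‖; the lower end is below the upper end. *)
From mathcomp Require Import all_boot all_order all_algebra.
From mathcomp Require Import ring.
Import Order.TTheory GRing.Theory Num.Theory.
Set Implicit Arguments. Unset Strict Implicit.
Local Open Scope ring_scope.

Lemma lagrange_identity (R : comPzRingType) (I : finType) (a b : I -> R) :
  \sum_i \sum_j (a i * b j - a j * b i) ^+ 2 =
  ((\sum_i a i ^+ 2) * (\sum_i b i ^+ 2) - (\sum_i a i * b i) ^+ 2) *+ 2.
Proof.
have expand i j : (a i * b j - a j * b i) ^+ 2 =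
    a i ^+ 2 * b j ^+ 2 + a j ^+ 2 * b i ^+ 2 - (a i * b i) * (a j * b j) *+ 2.
  by rewrite mulr2n; ring.
under eq_bigr do under eq_bigr do rewrite expand.
rewrite expr2 !big_distrlr /= mulrnBl mulr2n.
under eq_bigr do rewrite sumrB big_split /= sumrMnl.
by rewrite sumrB big_split /= sumrMnl [X in _ + X - _]exchange_big.
Qed.

Lemma cauchy_schwarz_sqr (R : realDomainType) (I : finType) (a b : I -> R) :
  (\sum_i a i * b i) ^+ 2 <= (\sum_i a i ^+ 2) * (\sum_i b i ^+ 2).
Proof.
rewrite -subr_ge0 -(pmulrn_lge0 _ (ltn0Sn 1)) -lagrange_identity.
by do 2!(apply: sumr_ge0 => ? _); exact: sqr_ge0.
Qed.

Lemma cauchy_schwarz (R : rcfType) (I : finType) (a b : I -> R) :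
  \sum_i a i * b i <= Num.sqrt (\sum_i a i ^+ 2) * Num.sqrt (\sum_i b i ^+ 2).
Proof.
have sum_sqr_ge0 (c : I -> R) : 0 <= \sum_i c i ^+ 2.
  by apply: sumr_ge0 => i _; exact: sqr_ge0.
rewrite -sqrtrM // (le_trans (ler_norm _)) // -sqrtr_sqr ler_sqrt.
  exact: cauchy_schwarz_sqr.
by rewrite mulr_ge0.
Qed.

Section IntervalBounds.
Variable R : rcfType.
Implicit Types (l c : R) (A : ivl R).

Lemma ile_ipoint A c : ile A (ipoint c) <-> ihi A <= c.
Proof.
split=> [[] //|hiA]; split=> //.
exact: le_trans (ilo_le_ihi A) hiA.
Qed.

Lemma iscale_ipoint l c : iscale l (ipoint c) = ipoint (l * c).
Proof.
rewrite /iscale /ipoint /=; move: (iscale_ok _ _); rewrite /= minxx maxxx => ok.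
by rewrite (bool_irrelevance ok (lexx _)).
Qed.

Lemma ihi_idot n (x : 'I_n -> R) (A : 'I_n -> ivl R) :
  ihi (idot x A) = \sum_(i < n) ihi (iscale (x i) (A i)).
Proof. exact: (big_morph (@ihi R) (id1 := 0) (op1 := +%R)). Qed.

Lemma ihi_iscale_le l A : ihi (iscale l A) <= `|l| * inorm A.
Proof.
rewrite /= ge_max /inorm; apply/andP; split;
  by rewrite (le_trans (ler_norm _)) // normrM ler_wpM2l // le_max lexx ?orbT.
Qed.

End IntervalBounds.

Theorem mainTheorem12 (R : rcfType) (n : nat) (x : 'I_n -> R)
    (A : 'I_n -> ivl R) :
  ile (idot x A) (iscale (enorm x) (ipoint (ivnorm A))).
Proof.
rewrite iscale_ipoint; apply/ile_ipoint; rewrite ihi_idot.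
have -> : enorm x = Num.sqrt (\sum_(i < n) `|x i| ^+ 2).
  by congr Num.sqrt; apply: eq_bigr => i _; rewrite real_normK ?num_real.
apply: le_trans (cauchy_schwarz _ _).
by apply: ler_sum => i _; exact: ihi_iscale_le.
Qed.
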